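(* Let $\Lambda$ be a closed convex subset of $[0,\infty)$ containing $0$, let $\Lambda_0=\Lambda\cap\mathbb N$ (with $0\in\mathbb N$), and assume that if $\sup\Lambda$ is finite then $\sup\Lambda\in\Lambda_0$. Let $\ell$ be an invariant pseudo-norm on a group $G$ with range exactly $\Lambda_0$. If $(G,\ell)$ is metrically LE$\mathcal C$ for $\mathcal C$ the class of finite groups with invariant $\Lambda$-valued pseudo-norms, then $(G,\ell)$ is metrically LE$\mathcal C_0$ for $\mathcal C_0$ the class of finite groups with invariant pseudo-norms taking values in $\Lambda_0$. The same holds with ''invariant'' omitted throughout.
   Context: A pseudo-norm on $G$ is $\ell:G\to\Lambda$ with $\ell(1)=0$, $\ell(g)=\ell(g^{-1})$, $\ell(gh)\le\ell(g)+\ell(h)$; invariant if $\ell(h^{-1}gh)=\ell(g)$. For pseudo-normed groups $(G_1,\ell_1),(G_2,\ell_2)$, finite $D\subseteq G_1$ and finite $Q\subseteq\Lambda\cap\mathbb Q$ with $0\in Q$, a map $\varphi:G_1\to G_2$ is a $D$-$Q$-almost-homomorphism if it is injective on $D$, $\varphi(hg)=\varphi(h)\varphi(g)$ whenever $h,g,hg\in D$, and $\ell_1(g)\,\square\,q\iff\ell_2(\varphi(g))\,\square\,q$ for all $g\in D$, $q\in Q$, $\square\in\{<,>,=\}$. For a class $\mathcal C$ of pseudo-normed groups, $(G,\ell)$ is metrically LE$\mathcal C$ if for every such $D,Q$ there are $(C,\ell_C)\in\mathcal C$ and a $D$-$Q$-almost-homomorphism $(G,\ell)\to(C,\ell_C)$.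 *)

From HB Require Import structures.
From mathcomp Require Import all_boot all_order all_algebra all_fingroup.
From mathcomp Require Import all_classical all_reals all_analysis.

Set Implicit Arguments.
Unset Strict Implicit.
Unset Printing Implicit Defensive.

Import Order.TTheory GRing.Theory Num.Theory.
Local Open Scope classical_set_scope.
Local Open Scope ring_scope.

Section PseudoNorms.
Variable R : realType.

Definition pseudo_norm (G : groupType) (l : G -> R) : Prop :=
  [/\ l 1%g = 0,
      forall g : G, l g = l (g^-1)%g
    & forall g h : G, l (g * h)%g <= l g + l h].

Definition invariant_pn (G : groupType) (l : G -> R) : Prop :=
  forall g h : G, l (h^-1 * g * h)%g = l g.

Definition almost_hom (G1 G2 : groupType) (l1 : G1 -> R) (l2 : G2 -> R)
  (D : seq G1) (Q : seq rat) (phi : G1 -> G2) : Prop :=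
  [/\ (forall x y, x \in D -> y \in D -> phi x = phi y -> x = y),
      (forall h g, h \in D -> g \in D -> (h * g)%g \in D ->
          phi (h * g)%g = (phi h * phi g)%g)
    & (forall g q, g \in D -> q \in Q ->
          [/\ (l1 g < ratr q <-> l2 (phi g) < ratr q),
              (l1 g > ratr q <-> l2 (phi g) > ratr q)
            & (l1 g = ratr q <-> l2 (phi g) = ratr q)])].

Definition metrically_LE (Lam : set R)
  (C : forall H : finGroupType, (H -> R) -> Prop)
  (G : groupType) (l : G -> R) : Prop :=
  forall (D : seq G) (Q : seq rat),
    (forall q, q \in Q -> Lam (ratr q)) -> (0 : rat) \in Q ->
    exists (H : finGroupType) (lH : H -> R),
      C H lH /\ exists phi : G -> H, almost_hom l lH D Q phi.

Definition nat_part (Lam : set R) : set R :=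
  fun r => Lam r /\ exists n : nat, r = n%:R.

Definition convex_set_R (Lam : set R) : Prop :=
  forall x y t, Lam x -> Lam y -> 0 <= t <= 1 -> Lam (t * x + (1 - t) * y).

Definition fin_pn_class (S : set R) (inv : bool) :
  forall H : finGroupType, (H -> R) -> Prop :=
  fun H lH => [/\ pseudo_norm lH, (inv -> invariant_pn lH)
                & forall x, S (lH x)].

End PseudoNorms.

(* Given [D] and [Q], apply the hypothesis with [Q] enlarged by the integers
   [floor q] and [max 0 (ceil q - 1)], which stay in [Lam] by convexity, and
   round the resulting norm on the finite group up to its ceiling.  The
   ceiling of an (invariant) pseudo-norm is again one; its values lie in
   [Lam] because [Lam] is an interval from [0] whose supremum, when finite,
   is an integer.  Finally, an integer lies above [q] iff it lies above
   [floor q], and below [q] iff it does not lie above [ceil q - 1]; these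
   comparisons are preserved by the almost-homomorphism. *)

From HB Require Import structures.
From mathcomp Require Import all_boot all_order all_algebra all_fingroup.
From mathcomp Require Import all_classical all_reals all_analysis.
From mathcomp Require Import zify.

Set Implicit Arguments.
Unset Strict Implicit.
Unset Printing Implicit Defensive.

Import Order.TTheory GRing.Theory Num.Theory numFieldNormedType.Exports.
Local Open Scope classical_set_scope.
Local Open Scope ring_scope.

Section Rounding.
Variable R : realType.
Implicit Types (Lam : set R) (x : R) (q : rat).

Lemma convex_set_R_le Lam x c :
  convex_set_R Lam -> Lam 0 -> Lam x -> 0 <= c <= x -> Lam c.
Proof.
move=> cvx L0 Lx /andP[c_ge0 c_lex].
have [x0|x_neq0] := eqVneq x 0.
  by have -> : c = 0 by apply/eqP; rewrite eq_le c_ge0 andbT -x0.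
have x_gt0 : 0 < x by rewrite lt_def x_neq0 (le_trans c_ge0 c_lex).
have := cvx x 0 (c / x) Lx L0.
rewrite mulr0 addr0 mulfVK //; apply.
by rewrite divr_ge0 ?(ltW x_gt0) //= ler_pdivrMr // mul1r.
Qed.

Lemma nat_part_ceil Lam x :
  convex_set_R Lam -> Lam 0 -> (has_ubound Lam -> nat_part Lam (sup Lam)) ->
  Lam x -> 0 <= x -> nat_part Lam (Num.ceil x)%:~R.
Proof.
move=> cvx L0 hsup Lx x_ge0.
have ceil_ge0 : 0 <= Num.ceil x by rewrite ceil_ge0 (lt_le_trans _ x_ge0) ?ltrN10.
split; last by exists `|Num.ceil x|%N; rewrite natr_absz ger0_norm.
have [z [Lz ceil_lez]] : exists z, Lam z /\ (Num.ceil x)%:~R <= z.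
  have [ubLam|unbounded] := pselect (has_ubound Lam).
    have [Lsup [k supE]] := hsup ubLam.
    exists (sup Lam); split => //; rewrite supE -[k%:R]/((Posz k)%:~R).
    by rewrite ler_int ceil_le_int; have := ub_le_sup ubLam Lx; rewrite supE.
  apply: contrapT => noz; apply: unbounded; exists (Num.ceil x)%:~R => z Lz.
  by rewrite leNgt; apply/negP => lt_z; apply: noz; exists z; split => //; apply: ltW.
by apply: (convex_set_R_le cvx L0 Lz); rewrite ler0z ceil_ge0.
Qed.

Definition ceil_norm (G : groupType) (l : G -> R) : G -> R :=
  fun g => (Num.ceil (l g))%:~R.

Lemma pseudo_norm_ceil (G : groupType) (l : G -> R) :
  pseudo_norm l -> pseudo_norm (ceil_norm l).
Proof.
case=> l1 lV lM; split=> [|g|g h]; rewrite /ceil_norm.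
- by rewrite l1 ceil0.
- by rewrite lV.
- rewrite -intrD ler_int ceil_le_int intrD.
  by rewrite (le_trans (lM g h)) // lerD ?ceil_ge.
Qed.

Lemma invariant_pn_ceil (G : groupType) (l : G -> R) :
  invariant_pn l -> invariant_pn (ceil_norm l).
Proof. by move=> linv g h; rewrite /ceil_norm linv. Qed.

Definition same_side (a b t : R) : Prop :=
  [/\ a < t <-> b < t, a > t <-> b > t & a = t <-> b = t].

Lemma same_side_ltgt a b t :
  (a < t <-> b < t) -> (a > t <-> b > t) -> same_side a b t.
Proof.
move=> lt_ab gt_ab; split=> //.
have eq_ltgt c : c = t <-> ~ (c < t) /\ ~ (c > t).
  split=> [->|[c_ge c_le]]; first by rewrite ltxx.
  by apply/eqP; rewrite eq_le !leNgt; apply/andP; split; apply/negP.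
by rewrite !eq_ltgt lt_ab gt_ab.
Qed.

(* The clipping at [0] keeps the threshold in [Lam] when [q = 0], where no
   [n >= 0] lies below [q] anyway. *)
Lemma same_side_int q (n c : int) : 0 <= n -> 0 <= c ->
  (Num.floor q < n) = (Num.floor q < c) ->
  (Num.max 0 (Num.ceil q - 1) < n) = (Num.max 0 (Num.ceil q - 1) < c) ->
  same_side n%:~R c%:~R (ratr q).
Proof.
move=> n_ge0 c_ge0 floor_nc ceil_nc.
have lt_q z : ((z%:~R : R) < ratr q) = (z < Num.ceil q).
  by rewrite -(ratr_int R z) ltr_rat ceil_gt_int.
have gt_q z : (ratr q < (z%:~R : R)) = (Num.floor q < z).
  by rewrite -(ratr_int R z) ltr_rat floor_lt_int.
apply: same_side_ltgt; rewrite ?lt_q ?gt_q ?floor_nc //.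
by case: (leP 0 (Num.ceil q - 1)) ceil_nc; lia.
Qed.

Lemma lt_int_ceil (m n : int) x :
  ((m%:~R : R) < n%:~R <-> m%:~R < x) -> (m < n) = (m < Num.ceil x).
Proof. by rewrite ceil_gt_int -(ltr_int R) => mnx; apply/idP/idP => /mnx. Qed.

Definition rounding_thresholds (Q : seq rat) : seq rat :=
  Q ++ [seq (Num.floor q)%:~R | q <- Q]
    ++ [seq (Num.max 0 (Num.ceil q - 1))%:~R | q <- Q].

Lemma rounding_thresholds_in Lam (Q : seq rat) :
  convex_set_R Lam -> Lam `<=` [set x | 0 <= x] -> Lam 0 ->
  (forall q, q \in Q -> Lam (ratr q)) ->
  forall p, p \in rounding_thresholds Q -> Lam (ratr p).
Proof.
move=> cvx Lge0 L0 QLam p; rewrite !mem_cat => /or3P[/QLam //|/mapP|/mapP];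
  move=> [q qQ ->]; have Lq := QLam q qQ;
  have q_ge0 : 0 <= q by rewrite -(ler0q R) Lge0.
all: apply: (convex_set_R_le cvx L0 Lq); rewrite ler0q ler_rat.
- by rewrite ler0z floor_ge0 q_ge0 floor_le.
- case: (leP 0 (Num.ceil q - 1)) => [c_ge0|_]; last exact: q_ge0.
  by rewrite ler0z c_ge0 ltW ?ceilB1_lt.
Qed.

Lemma metrically_LE_nat_part Lam (inv : bool) (G : groupType) (l : G -> R) :
  convex_set_R Lam -> Lam `<=` [set x | 0 <= x] -> Lam 0 ->
  (has_ubound Lam -> nat_part Lam (sup Lam)) ->
  (forall g, exists n : nat, l g = n%:R) ->
  metrically_LE Lam (fin_pn_class Lam inv) l ->
  metrically_LE Lam (fin_pn_class (nat_part Lam) inv) l.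
Proof.
move=> cvx Lge0 L0 hsup l_nat hLE D Q QLam Q0.
have Q0' : (0 : rat) \in rounding_thresholds Q by rewrite mem_cat Q0.
have [H [lH [[pnH invH LH] [phi [phi_inj phi_hom phi_cmp]]]]] :=
  hLE D _ (rounding_thresholds_in cvx Lge0 L0 QLam) Q0'.
exists H, (ceil_norm lH); split.
  split=> [|/invH/invariant_pn_ceil //|h]; first exact: pseudo_norm_ceil.
  exact: nat_part_ceil (LH h) (Lge0 _ (LH h)).
exists phi; split=> // g q gD qQ.
have [n lgE] := l_nat g.
have lt_threshold m : (m%:~R : rat) \in rounding_thresholds Q ->
    (m < n) = (m < Num.ceil (lH (phi g))).
  move=> mQ; have [_ gt_m _] := phi_cmp g _ gD mQ.
  by apply: lt_int_ceil; rewrite ratr_int lgE in gt_m.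
have lH_gt_N1 : -1 < lH (phi g) := lt_le_trans (ltrN10 R) (Lge0 _ (LH _)).
rewrite /ceil_norm lgE -[n%:R]/((Posz n)%:~R).
apply: same_side_int; rewrite ?ceil_ge0 //; apply: lt_threshold.
- by rewrite !mem_cat; apply/or3P/Or32/mapP; exists q.
- by rewrite !mem_cat; apply/or3P/Or33/mapP; exists q.
Qed.

End Rounding.

Theorem proposition2p7 (R : realType) (Lam : set R) :
  closed Lam ->
  convex_set_R Lam ->
  Lam `<=` [set x | 0 <= x] ->
  Lam 0 ->
  (has_ubound Lam -> nat_part Lam (sup Lam)) ->
  (forall (G : groupType) (l : G -> R),
      pseudo_norm l -> invariant_pn l ->
      (forall r, (exists g, l g = r) <-> nat_part Lam r) ->
      metrically_LE Lam (fin_pn_class Lam true) l ->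
      metrically_LE Lam (fin_pn_class (nat_part Lam) true) l) /\
  (forall (G : groupType) (l : G -> R),
      pseudo_norm l ->
      (forall r, (exists g, l g = r) <-> nat_part Lam r) ->
      metrically_LE Lam (fin_pn_class Lam false) l ->
      metrically_LE Lam (fin_pn_class (nat_part Lam) false) l).
Proof.
move=> _ cvx Lge0 L0 hsup.
have l_nat (G : groupType) (l : G -> R) :
    (forall r, (exists g, l g = r) <-> nat_part Lam r) ->
    forall g, exists n : nat, l g = n%:R.
  by move=> range g; have [_] := (range (l g)).1 (ex_intro _ g erefl).
split=> [G l _ _ /l_nat|G l _ /l_nat]; exact: metrically_LE_nat_part.
Qed.
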